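(* Let $E=\{(s_q,t_q):q\in\omega\}$ be a test and let $T$ be the tree generated by $E$. Then $T$ is a tree with acyclic levels.
   Context: Let $\varphi:\omega\to\omega^2$ be the bijection with inverse $\langle n,p\rangle:=\varphi^{-1}(n,p)=\left(\sum_{k\leq n+p}k\right)+p$, and write $\varphi(q)=((q)_0,(q)_1)$. A set $E\subseteq\bigcup_{q\in\omega}2^q\times 2^q$ is a test if: (a) for each $q\in\omega$ there is a unique $(s_q,t_q)\in E\cap(2^q\times 2^q)$; (b) for all $m,p\in\omega$ and $u\in 2^{<\omega}$ there is $v\in 2^{<\omega}$ with $(s_p0uv,t_p1uv)\in E$ and $(|t_p1uv|-1)_0=m$; (c) for each $n>0$ there are $q<n$ and $w\in 2^{<\omega}$ with $s_n=s_q0w$ and $t_n=t_q1w$. (Juxtaposition denotes concatenation of finite binary sequences.) The tree generated by $E$ is $T:=\{(s,t)\in 2^{<\omega}\times 2^{<\omega}: s=t=\emptyset$ or $\exists q\in\omega\ \exists w\in 2^{<\omega}\ (s,t)=(s_q0w,t_q1w)\}$. A tree $T$ on $2\times 2$ has acyclic levels if for each $p$ the bipartite graph with vertex set $\{(s,0):s\in 2^p\}\cup\{(t,1):t\in 2^p\}$ and edges $\{(s,0),(t,1)\}$ for $(s,t)\in T\cap(2^p\times 2^p)$ is acyclic. *)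

(* finite binary sequences are [seq bool] (0 = false, 1 = true). *)
From mathcomp Require Import all_boot.
Set Implicit Arguments. Unset Strict Implicit. Unset Printing Implicit Defensive.

Definition pairing (n p : nat) : nat := (\sum_(k < (n + p).+1) k) + p.

(* phi = inverse of pairing; since <n,p> >= n + p, any preimage of q has both
   coordinates <= q, so a finite search finds it (default (0,0) never used). *)
Definition phi (q : nat) : nat * nat :=
  match [pick np : 'I_q.+1 * 'I_q.+1 | pairing np.1 np.2 == q] with
  | Some np => (val np.1, val np.2)
  | None => (0, 0)
  end.

Definition coord0 (q : nat) : nat := (phi q).1.

(* E ⊆ ⋃_q 2^q × 2^q is a test, with (s q, t q) its unique element on level q. *)
Definition is_test (E : seq bool -> seq bool -> Prop) (s t : nat -> seq bool) : Prop :=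
  (forall x y, E x y -> size x = size y) /\
  (forall q, size (s q) = q /\ size (t q) = q /\ E (s q) (t q) /\
     (forall x y, size x = q -> size y = q -> E x y -> x = s q /\ y = t q)) /\
  (forall (m p : nat) (u : seq bool), exists v : seq bool,
     E (s p ++ false :: u ++ v) (t p ++ true :: u ++ v) /\
     coord0 (size (t p ++ true :: u ++ v)).-1 = m) /\
  (forall n, 0 < n -> exists q, exists w : seq bool,
     q < n /\ s n = s q ++ false :: w /\ t n = t q ++ true :: w).

Definition gen_tree (s t : nat -> seq bool) (x y : seq bool) : Prop :=
  (x = [::] /\ y = [::]) \/
  exists q, exists w : seq bool, x = s q ++ false :: w /\ y = t q ++ true :: w.

Definition is_tree2 (T : seq bool -> seq bool -> Prop) : Prop :=
  (forall x y, T x y -> size x = size y) /\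
  (forall x y n, T x y -> n <= size x -> T (take n x) (take n y)).

(* Level-p bipartite graph of T: vertices (x,false) and (y,true) with x,y in 2^p,
   edge {(x,false),(y,true)} iff (x,y) in T. *)
Definition lev_adj (T : seq bool -> seq bool -> Prop) (p : nat)
  (a b : seq bool * bool) : Prop :=
  size a.1 = p /\ size b.1 = p /\
  ((a.2 = false /\ b.2 = true /\ T a.1 b.1) \/
   (a.2 = true /\ b.2 = false /\ T b.1 a.1)).

Definition is_cycle (adj : seq bool * bool -> seq bool * bool -> Prop)
  (c : seq (seq bool * bool)) : Prop :=
  2 < size c /\ uniq c /\
  forall i, i < size c ->
    adj (nth ([::], false) c i) (nth ([::], false) c ((i.+1) %% size c)).

Definition acyclic_levels (T : seq bool -> seq bool -> Prop) : Prop :=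
  forall p, ~ exists c, is_cycle (lev_adj T p) c.

From mathcomp Require Import all_boot.
From mathcomp Require Import zify.

Set Implicit Arguments.
Unset Strict Implicit.
Unset Printing Implicit Defensive.

(* A cycle in the level-(p+1) graph either keeps the last bit of its vertices
   constant, and then truncating every vertex to length p yields a cycle on
   level p, or it changes that bit at least twice along the cycle.  In the
   tree generated by a test, an edge (x, y) whose last bits differ must be
   (s_p 0, t_p 1): every element of the tree other than the root has the form
   (s_q 0 w, t_q 1 w), and the last bits differ only when w is empty.  A
   cycle visits distinct vertices, so it cannot cross that single edge twice.
   Induction on the level concludes, level 0 having only two vertices. *)

Local Notation vertex := (seq bool * bool)%type.

Section Cycles.

Definition cnth (c : seq vertex) (i : nat) : vertex :=
  nth ([::], false) c (i %% size c).

Lemma cnth_mod (c : seq vertex) i : cnth c (i %% size c) = cnth c i.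
Proof. by rewrite /cnth modn_mod. Qed.

Lemma cnthP (c : seq vertex) v : v \in c -> exists i, v = cnth c i.
Proof.
by case/(nthP ([::], false)) => i lt_i_c <-; exists i; rewrite /cnth modn_small.
Qed.

Lemma cnth_inj (c : seq vertex) i j :
  uniq c -> 0 < size c -> cnth c i = cnth c j -> i = j %[mod size c].
Proof.
by move=> uniq_c c_gt0 /eqP; rewrite nth_uniq ?ltn_mod // => /eqP.
Qed.

Variable adj : vertex -> vertex -> Prop.

Lemma is_cycle_cnth c : is_cycle adj c -> forall i, adj (cnth c i) (cnth c i.+1).
Proof.
move=> [c_gt2 [_ adj_c]] i; rewrite -cnth_mod -[cnth c i.+1]cnth_mod.
by rewrite /cnth !modn_mod -addn1 -modnDml addn1; apply: adj_c; rewrite ltn_mod; lia.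
Qed.

Lemma is_cycle_map (adj' : vertex -> vertex -> Prop) (f : vertex -> vertex) c :
  is_cycle adj c -> {in c &, injective f} ->
  (forall a b, adj a b -> adj' (f a) (f b)) -> is_cycle adj' (map f c).
Proof.
move=> [c_gt2 [uniq_c adj_c]] inj_f adj_f; rewrite /is_cycle size_map.
split=> //; split; first by rewrite map_inj_in_uniq.
move=> i lt_i_c; rewrite !(nth_map ([::], false)) ?ltn_mod; try lia.
exact/adj_f/adj_c.
Qed.

Lemma exists_switch (g : nat -> bool) a b :
  a <= b -> g a != g b -> exists2 k, a <= k < b & g k != g k.+1.
Proof.
elim: b => [|b IHb]; first by rewrite leqn0 => /eqP-> /eqP.
rewrite leq_eqVlt => /predU1P[-> /eqP //|]; rewrite ltnS => le_ab.
case: (eqVneq (g a) (g b)) => [-> g_switch|/(IHb le_ab)[k /andP[le_ak lt_kb] g_k] _].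
  by exists b => //; rewrite le_ab ltnSn.
by exists k => //; rewrite le_ak ltnS ltnW.
Qed.

Lemma cycle_switch_const (f : vertex -> bool) (A B : vertex) c :
  is_cycle adj c ->
  (forall a b, adj a b -> f a != f b -> (a, b) = (A, B) \/ (a, b) = (B, A)) ->
  {in c &, forall u v, f u = f v}.
Proof.
move=> cyc_c switch_AB; have [c_gt2 [uniq_c _]] := cyc_c.
have c_gt0 : 0 < size c by lia.
suff const_f i : f (cnth c i) = f (cnth c 0).
  by move=> _ _ /cnthP[i ->] /cnthP[j ->]; rewrite !const_f.
apply/eqP; apply: contraT => f_i.
pose g k := f (cnth c k).
have lt_ic : i %% size c < size c by rewrite ltn_mod.
have [k1 /andP[_ lt_k1] g_k1] : exists2 k, 0 <= k < i %% size c & g k != g k.+1.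
  by apply: exists_switch; rewrite // /g cnth_mod eq_sym.
have [k2 /andP[le_k2 lt_k2] g_k2] : exists2 k, i %% size c <= k < size c & g k != g k.+1.
  apply: exists_switch; first exact: ltnW.
  by rewrite /g cnth_mod -[cnth c (size c)]cnth_mod modnn.
have [/(cnth_inj uniq_c c_gt0)|[e12 e21]] :
    cnth c k1 = cnth c k2 \/
    cnth c k1 = cnth c k2.+1 /\ cnth c k1.+1 = cnth c k2.
  move: (switch_AB _ _ (is_cycle_cnth cyc_c k1) g_k1).
  move: (switch_AB _ _ (is_cycle_cnth cyc_c k2) g_k2).
  by case=> -[-> ->] [] [-> ->]; auto.
  by rewrite !modn_small //; lia.
(* The positions k1 < k2 are then consecutive both ways round the cycle. *)
move: e12 e21 => /(cnth_inj uniq_c c_gt0) e12 /(cnth_inj uniq_c c_gt0) e21.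
have : k1 + 2 = k1 + 0 %[mod size c].
  by rewrite -addSnnS -modnDml e21 modnDml addn1 -e12 addn0.
by move/eqP; rewrite eqn_modDl eqn_mod_dvd // subn0 => /dvdn_leq; lia.
Qed.

End Cycles.

Definition trunc (p : nat) (v : vertex) : vertex := (take p v.1, v.2).

Lemma trunc_inj_last p (u v : vertex) :
  size u.1 = p.+1 -> size v.1 = p.+1 -> last false u.1 = last false v.1 ->
  trunc p u = trunc p v -> u = v.
Proof.
case: u v => [+ i] [+ j] /=; case/lastP=> // x a; case/lastP=> // y b.
rewrite !size_rcons !last_rcons => -[size_x] [size_y] -> [].
by rewrite -!cats1 !take_size_cat // => -> ->.
Qed.

Section Levels.

Variable T : seq bool -> seq bool -> Prop.

Lemma lev_cycle_size p c v : is_cycle (lev_adj T p) c -> v \in c -> size v.1 = p.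
Proof.
move=> [_ [_ adj_c]] /(nthP ([::], false))[i lt_ic <-].
by case: (adj_c i lt_ic).
Qed.

Lemma level0_acyclic : ~ exists c, is_cycle (lev_adj T 0) c.
Proof.
move=> [c cyc_c]; have [c_gt2 [uniq_c _]] := cyc_c.
suff: size c <= size ([:: ([::], false); ([::], true)] : seq vertex) by rewrite leqNgt c_gt2.
apply: uniq_leq_size => // -[x b] /(lev_cycle_size cyc_c) /size0nil /= ->.
by case: b; rewrite !inE eqxx ?orbT.
Qed.

Lemma lev_adj_trunc p a b :
  is_tree2 T -> lev_adj T p.+1 a b -> lev_adj T p (trunc p a) (trunc p b).
Proof.
move=> [_ T_take] [size_a [size_b adj_ab]].
rewrite /lev_adj /= !size_take size_a size_b ltnSn; do 2 split=> //.
case: adj_ab => [[-> [-> T_ab]] | [-> [-> T_ba]]].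
  by left; do 2 split=> //; apply: T_take; rewrite ?size_a.
by right; do 2 split=> //; apply: T_take; rewrite ?size_b.
Qed.

Lemma lev_acyclicS p A B :
  is_tree2 T ->
  (forall a b, lev_adj T p.+1 a b -> last false a.1 != last false b.1 ->
     (a, b) = (A, B) \/ (a, b) = (B, A)) ->
  ~ (exists c, is_cycle (lev_adj T p) c) -> ~ exists c, is_cycle (lev_adj T p.+1) c.
Proof.
move=> tree_T switch_AB acyclic_p [c cyc_c]; apply: acyclic_p.
exists (map (trunc p) c); apply: (is_cycle_map cyc_c) => [|a b]; last exact: lev_adj_trunc.
move=> u v u_c v_c; apply: trunc_inj_last; rewrite ?(lev_cycle_size cyc_c) //.
exact: (cycle_switch_const cyc_c switch_AB).
Qed.

End Levels.

Section GeneratedTree.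

Variables s t : nat -> seq bool.
Hypothesis size_s : forall q, size (s q) = q.
Hypothesis size_t : forall q, size (t q) = q.
Hypothesis branch_st : forall n, 0 < n -> exists q, exists w : seq bool,
  q < n /\ s n = s q ++ false :: w /\ t n = t q ++ true :: w.

Lemma gen_tree_take_branch q w n :
  gen_tree s t (take n (s q)) (take n (t q)) ->
  gen_tree s t (take n (s q ++ false :: w)) (take n (t q ++ true :: w)).
Proof.
rewrite !take_cat size_s size_t; case: ltnP => // le_qn.
case: (n - q) => [|k] T_q; last by right; exists q, (take k w).
by rewrite /= !cats0; move: T_q; rewrite !take_oversize ?size_s ?size_t.
Qed.

Lemma gen_tree_take_level q n : gen_tree s t (take n (s q)) (take n (t q)).
Proof.
elim/ltn_ind: q n => -[|q] IHq n.
  by left; move: (size_s 0) (size_t 0) => /size0nil-> /size0nil->.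
have [q' [w [lt_q'q [-> ->]]]] := branch_st (ltn0Sn q).
exact/gen_tree_take_branch/IHq.
Qed.

Lemma gen_tree_is_tree : is_tree2 (gen_tree s t).
Proof.
split=> [x y [[-> ->] | [q [w [-> ->]]]] | x y n [[-> ->] | [q [w [-> ->]]]] _].
- by [].
- by rewrite !size_cat size_s size_t.
- by left.
- exact/gen_tree_take_branch/gen_tree_take_level.
Qed.

Lemma gen_tree_last_switch x y p :
  gen_tree s t x y -> size x = p.+1 -> last false x != last false y ->
  x = rcons (s p) false /\ y = rcons (t p) true.
Proof.
move=> [[-> ->] // | [q [w [-> ->]]]].
rewrite size_cat size_s !last_cat; case: w => [|b w] /=; last by rewrite eqxx.
by rewrite addn1 => -[<-]; rewrite -!cats1.
Qed.

Lemma gen_tree_lev_switch p a b :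
  lev_adj (gen_tree s t) p.+1 a b -> last false a.1 != last false b.1 ->
  (a, b) = ((rcons (s p) false, false), (rcons (t p) true, true)) \/
  (a, b) = ((rcons (t p) true, true), (rcons (s p) false, false)).
Proof.
case: a b => [x i] [y j] [/= size_x [size_y [[-> [-> T_xy]] | [-> [-> T_yx]]]]] switch.
  by have [-> ->] := gen_tree_last_switch T_xy size_x switch; left.
rewrite eq_sym in switch.
by have [-> ->] := gen_tree_last_switch T_yx size_y switch; right.
Qed.

End GeneratedTree.

Theorem proposition3p2 (E : seq bool -> seq bool -> Prop) (s t : nat -> seq bool) :
  is_test E s t -> is_tree2 (gen_tree s t) /\ acyclic_levels (gen_tree s t).
Proof.
move=> [_ [test_a [_ test_c]]].
have size_s q : size (s q) = q by case: (test_a q).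
have size_t q : size (t q) = q by case: (test_a q) => _ [].
have tree := gen_tree_is_tree size_s size_t test_c.
split=> // p; elim: p => [|p IHp]; first exact: level0_acyclic.
by apply: (lev_acyclicS tree) IHp; apply: gen_tree_lev_switch.
Qed.
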